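(* Let $R\in\{\mathrm{ML},\mathrm{wML},\mathrm{C},\mathrm{S}\}$. Then there is a precise forecasting system $\varphi$ for which every path $\omega\in\Omega$ is $R$-random; moreover, any such precise forecasting system is necessarily non-stationary and non-computable.
   Context: Notation: $\mathbb N=\{1,2,\dots\}$, $\mathbb N_0=\mathbb N\cup\{0\}$. $\Omega=\{0,1\}^{\mathbb N}$ is the set of paths $\omega=(\omega_1,\omega_2,\dots)$; $\omega_{1:n}=(\omega_1,\dots,\omega_n)$, $\omega_{1:0}=\square$. $\mathbb S=\bigcup_{n\in\mathbb N_0}\{0,1\}^n$ is the set of situations, $|s|$ the length, $sx$ concatenation. $\mathscr I$ is the set of closed intervals $I\subseteq[0,1]$. For $r\in[0,1]$, $f:\{0,1\}\to\mathbb R$: $E_r(f)=rf(1)+(1-r)f(0)$; $\overline E_I(f)=\max_{r\in I}E_r(f)$. A forecasting system is a map $\varphi:\mathbb S\to\mathscr I$; $\underline\varphi(s)=\min\varphi(s)$, $\overline\varphi(s)=\max\varphi(s)$; precise if each $\varphi(s)$ is a singleton; stationary if constant. A real process is $F:\mathbb S\to\mathbb R$; $\Delta F(s)$ is $x\mapsto F(sx)-F(s)$. $M$ is a supermartingale for $\varphi$ if $\overline E_{\varphi(s)}(\Delta M(s))\le0$ for all $s$. A test process is a non-negative real process with $F(\square)=1$; a test supermartingale for $\varphi$ is a test process that is a supermartingale for $\varphi$. A multiplier process $D$ assigns to each $s$ a function $D(s):\{0,1\}\to[0,\infty)$ and generates the test process $F(\square)=1$, $F(sx)=F(s)D(s)(x)$.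 Computability: maps from countable effectively encoded domains to $\mathbb N_0$ or $\mathbb Q$ are recursive if Turing-computable; a real map $r$ on a domain $\mathscr D$ is lower semicomputable if $r(d)=\lim_nq(d,n)$ for a recursive rational $q$ non-decreasing in $n$, computable if $|r(d)-q(d,n)|<2^{-n}$ for a recursive rational $q$. A forecasting system is computable if $\underline\varphi,\overline\varphi$ are computable. $\mathscr F_{\mathrm{ML}}$: lower semicomputable test processes; $\mathscr F_{\mathrm{wML}}$: test processes generated by lower semicomputable multiplier processes; $\mathscr F_{\mathrm C}=\mathscr F_{\mathrm S}$: positive rational-valued recursive test processes. $\overline{\mathbb T}_R(\varphi)$: elements of $\mathscr F_R$ that are test supermartingales for $\varphi$. For $R\in\{\mathrm{ML},\mathrm{wML},\mathrm C\}$, $\omega$ is $R$-random for $\varphi$ if no $T\in\overline{\mathbb T}_R(\varphi)$ has $\limsup_nT(\omega_{1:n})=\infty$. A real growth function is a computable, non-decreasing, unbounded $\tau:\mathbb N_0\to[0,\infty)$; $\omega$ is S-random for $\varphi$ if there are no $T\in\overline{\mathbb T}_{\mathrm S}(\varphi)$ and real growth function $\tau$ with $\limsup_n[T(\omega_{1:n})-\tau(n)]\ge0$. *)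

From Stdlib Require Import Reals Lra List.
Import ListNotations.
Open Scope R_scope.

(* Turing computability, via mu-recursive (partial recursive) functions *)
Inductive recfn : Type :=
| RZero : recfn
| RSucc : recfn
| RProj : nat -> recfn
| RComp : recfn -> list recfn -> recfn
| RPrec : recfn -> recfn -> recfn
| RMu   : recfn -> recfn.

Inductive reval : recfn -> list nat -> nat -> Prop :=
| ev_zero xs : reval RZero xs 0
| ev_succ x xs : reval RSucc (x :: xs) (Datatypes.S x)
| ev_proj i xs : (i < length xs)%nat -> reval (RProj i) xs (nth i xs 0%nat)
| ev_comp f gs xs ys y :
    revals gs xs ys -> reval f ys y -> reval (RComp f gs) xs y
| ev_prec0 f g xs y : reval f xs y -> reval (RPrec f g) (0%nat :: xs) y
| ev_precS f g n xs r y :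
    reval (RPrec f g) (n :: xs) r -> reval g (n :: r :: xs) y ->
    reval (RPrec f g) (Datatypes.S n :: xs) y
| ev_mu f xs n :
    reval f (n :: xs) 0%nat ->
    (forall m, (m < n)%nat -> exists k, reval f (m :: xs) (Datatypes.S k)) ->
    reval (RMu f) xs n
with revals : list recfn -> list nat -> list nat -> Prop :=
| evs_nil xs : revals [] xs []
| evs_cons g gs xs y ys :
    reval g xs y -> revals gs xs ys -> revals (g :: gs) xs (y :: ys).

Definition situation := list bool.
Definition path := nat -> bool.

(* Effective encoding of situations into nat (binary with a leading 1). *)
Definition encS (s : situation) : nat :=
  fold_left (fun acc (b : bool) => (2 * acc + (if b then 1 else 0))%nat) s 1%nat.

(* omega_{1:n} : the first n bits of the path (omega_1 = w 0). *)
Definition prefix (w : path) (n : nat) : situation := map w (seq 0 n).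

Definition rec_rat {D : Type} (enc : D -> list nat) (r : D -> R) : Prop :=
  exists c1 c2 c3 : recfn, forall d, exists a b k : nat,
    reval c1 (enc d) a /\ reval c2 (enc d) b /\ reval c3 (enc d) k /\
    r d = (INR a - INR b) / (INR k + 1).

Definition encN {D : Type} (enc : D -> list nat) (dn : D * nat) : list nat :=
  snd dn :: enc (fst dn).

Definition lower_semicomputable {D : Type} (enc : D -> list nat) (r : D -> R) : Prop :=
  exists q : D -> nat -> R,
    rec_rat (encN enc) (fun dn => q (fst dn) (snd dn)) /\
    forall d, (forall n, q d n <= q d (Datatypes.S n)) /\ Un_cv (q d) (r d).

Definition computable_real {D : Type} (enc : D -> list nat) (r : D -> R) : Prop :=
  exists q : D -> nat -> R,
    rec_rat (encN enc) (fun dn => q (fst dn) (snd dn)) /\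
    forall d n, Rabs (r d - q d n) < / 2 ^ n.

Definition encSit (s : situation) : list nat := [encS s].
Definition encSitBit (sx : situation * bool) : list nat :=
  [encS (fst sx); if snd sx then 1%nat else 0%nat].
Definition encNat (n : nat) : list nat := [n].

Definition forecasting_system (phi : situation -> R * R) : Prop :=
  forall s, 0 <= fst (phi s) /\ fst (phi s) <= snd (phi s) /\ snd (phi s) <= 1.

Definition precise (phi : situation -> R * R) : Prop :=
  forall s, fst (phi s) = snd (phi s).

Definition stationary (phi : situation -> R * R) : Prop :=
  exists I : R * R, forall s, phi s = I.

Definition computable_fs (phi : situation -> R * R) : Prop :=
  computable_real encSit (fun s => fst (phi s)) /\
  computable_real encSit (fun s => snd (phi s)).

Definition Ex (r : R) (f : bool -> R) : R := r * f true + (1 - r) * f false.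

Definition Delta (F : situation -> R) (s : situation) : bool -> R :=
  fun x => F (s ++ [x]) - F s.

(* Supermartingale: max_{r in phi(s)} E_r(Delta M(s)) <= 0, i.e. for all
   r in the closed interval phi(s), E_r(Delta M(s)) <= 0. *)
Definition supermartingale (phi : situation -> R * R) (M : situation -> R) : Prop :=
  forall s r, fst (phi s) <= r <= snd (phi s) -> Ex r (Delta M s) <= 0.

Definition test_process (F : situation -> R) : Prop :=
  (forall s, 0 <= F s) /\ F [] = 1.

Definition test_supermartingale phi F : Prop :=
  test_process F /\ supermartingale phi F.

Definition F_ML (T : situation -> R) : Prop :=
  test_process T /\ lower_semicomputable encSit T.

Definition generated_by (D : situation -> bool -> R) (T : situation -> R) : Prop :=
  T [] = 1 /\ forall s x, T (s ++ [x]) = T s * D s x.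

Definition F_wML (T : situation -> R) : Prop :=
  test_process T /\
  exists D : situation -> bool -> R,
    (forall s x, 0 <= D s x) /\
    lower_semicomputable encSitBit (fun sx => D (fst sx) (snd sx)) /\
    generated_by D T.

(* F_C = F_S : positive rational-valued recursive test processes *)
Definition F_C (T : situation -> R) : Prop :=
  test_process T /\ (forall s, 0 < T s) /\ rec_rat encSit T.

Definition growth_function (tau : nat -> R) : Prop :=
  computable_real encNat tau /\
  (forall n, 0 <= tau n) /\
  (forall n m, (n <= m)%nat -> tau n <= tau m) /\
  (forall B, exists n, tau n > B).

Definition limsup_infty (a : nat -> R) : Prop :=
  forall B N, exists n, (N <= n)%nat /\ a n > B.

Definition limsup_nonneg (a : nat -> R) : Prop :=
  forall eps N, eps > 0 -> exists n, (N <= n)%nat /\ a n > - eps.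

Inductive rnotion := R_ML | R_wML | R_C | R_S.

Definition random (Rn : rnotion) (phi : situation -> R * R) (w : path) : Prop :=
  match Rn with
  | R_ML => ~ exists T, F_ML T /\ test_supermartingale phi T /\
                        limsup_infty (fun n => T (prefix w n))
  | R_wML => ~ exists T, F_wML T /\ test_supermartingale phi T /\
                        limsup_infty (fun n => T (prefix w n))
  | R_C => ~ exists T, F_C T /\ test_supermartingale phi T /\
                        limsup_infty (fun n => T (prefix w n))
  | R_S => ~ exists T tau, F_C T /\ test_supermartingale phi T /\
                        growth_function tau /\
                        limsup_nonneg (fun n => T (prefix w n) - tau n)
  end.

(* Existence: every test process in F_ML, F_wML or F_C is described by finitely
   many mu-recursive programs, so each class is covered by a sequence (T_n). A
   process that is unbounded along some path increases at infinitely many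
   situations, so one can attach to every such T_n its own situation s_n where
   it increases, and forecast at s_n, with certainty, an outcome on which T_n
   goes up. Then no T_n that is unbounded somewhere is a supermartingale for this
   precise forecast, and every path is random. S-randomness reduces to this:
   limsup (T(w_{1:n}) - tau(n)) >= 0 with tau unbounded forces T to be unbounded
   along w.

   Non-stationarity and non-computability: a rational approximation to within
   1/16 of a computable precise forecast (or the constant value of a stationary
   one) yields a computable side d(s) with phi(s) >= 2/5 when d(s) holds and
   phi(s) <= 3/5 otherwise. Betting against d, i.e. multiplying the capital by
   3/2 when the next outcome differs from d(s) and by 1/4 otherwise, is fair at
   the boundary forecasts 2/5 and 3/5, so it is a positive rational recursive test
   supermartingale; along the path that always contradicts d it grows like
   (3/2)^n. *)

From Pilot Require Import Defs.
From Stdlib Require Import Reals List Lia Lra Cantor Classical ClassicalEpsilon FunctionalExtensionality.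
Import ListNotations.
Open Scope nat_scope.

(** * Mu-recursive programs *)

(* Structural recursion on the first derivation: the premises of [ev_mu] hidden
   under [forall m, m < n -> exists k, _] are subderivations, which a
   [Scheme]-generated induction principle would not expose. *)
Fixpoint reval_det f xs y (H : reval f xs y) {struct H} :
  forall y', reval f xs y' -> y = y'
with revals_det gs xs ys (H : revals gs xs ys) {struct H} :
  forall ys', revals gs xs ys' -> ys = ys'.
Proof.
  - destruct H as [xs|x xs|i xs Hi|f gs xs ys y Hgs Hf|f g xs y Hf|f g n xs r y Hr Hg
                  |f xs n Hn Hlt];
      intros y' H'; inversion H'; subst; try reflexivity.
    + match goal with Hgs' : revals gs xs ?zs, Hf' : reval f ?zs y' |- _ =>
        rewrite <- (revals_det _ _ _ Hgs _ Hgs') in Hf'; exact (reval_det _ _ _ Hf _ Hf') end.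
    + match goal with Hf' : reval f xs y' |- _ => exact (reval_det _ _ _ Hf _ Hf') end.
    + match goal with Hr' : reval (RPrec f g) _ ?z, Hg' : reval g _ y' |- _ =>
        rewrite <- (reval_det _ _ _ Hr _ Hr') in Hg'; exact (reval_det _ _ _ Hg _ Hg') end.
    + match goal with Hn' : reval f (y' :: xs) 0, Hlt' : forall m, m < y' -> _ |- _ =>
        destruct (Nat.lt_trichotomy n y') as [Hl|[Heq|Hgt]]; [| exact Heq |];
        [ destruct (Hlt' n Hl) as [k Hk]; discriminate (reval_det _ _ _ Hn _ Hk)
        | destruct (Hlt y' Hgt) as [k Hk]; discriminate (reval_det _ _ _ Hk _ Hn') ] end.
  - destruct H as [xs|g gs xs y ys Hg Hgs]; intros ys' H'; inversion H'; subst; [reflexivity|].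
    f_equal; [exact (reval_det _ _ _ Hg _ ltac:(eassumption))
             |exact (revals_det _ _ _ Hgs _ ltac:(eassumption))].
Qed.

Lemma reval_comp1 f g xs a y :
  reval g xs a -> reval f [a] y -> reval (RComp f [g]) xs y.
Proof. intros; econstructor; [repeat econstructor |]; eassumption. Qed.

Lemma reval_comp2 f g1 g2 xs a b y :
  reval g1 xs a -> reval g2 xs b -> reval f [a; b] y -> reval (RComp f [g1; g2]) xs y.
Proof. intros; econstructor; [repeat econstructor |]; eassumption. Qed.

Lemma reval_eq f xs y y' : reval f xs y -> y = y' -> reval f xs y'.
Proof. now intros H ->. Qed.

Fixpoint rf_const k := match k with 0 => RZero | S k => RComp RSucc [rf_const k] end.

Lemma reval_const k xs : reval (rf_const k) xs k.
Proof.
  induction k as [|k IH]; [constructor|].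
  eapply reval_comp1; [exact IH | constructor].
Qed.

Ltac reval_leaf :=
  lazymatch goal with
  | |- reval (rf_const _) _ _ => apply reval_const
  | |- reval RZero _ _ => constructor
  | |- reval (RProj ?i) ?xs _ =>
      eapply reval_eq; [exact (ev_proj i xs ltac:(simpl; lia)) | cbn [nth]; reflexivity]
  end.

Definition rf_add := RPrec (RProj 0) (RComp RSucc [RProj 1]).

Lemma reval_add x y : reval rf_add [x; y] (x + y).
Proof.
  induction x as [|x IH]; [apply ev_prec0; reval_leaf|].
  eapply ev_precS; [exact IH|]. eapply reval_comp1; [reval_leaf | constructor].
Qed.

Definition rf_mul := RPrec RZero (RComp rf_add [RProj 1; RProj 2]).

Lemma reval_mul x y : reval rf_mul [x; y] (x * y).
Proof.
  induction x as [|x IH]; [apply ev_prec0; reval_leaf|].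
  eapply ev_precS; [exact IH|]. eapply reval_comp2; [reval_leaf | reval_leaf |].
  eapply reval_eq; [apply reval_add | lia].
Qed.

Definition rf_pred := RPrec RZero (RProj 0).

Lemma reval_pred x : reval rf_pred [x] (x - 1).
Proof.
  induction x as [|x IH]; [apply ev_prec0; reval_leaf|].
  eapply ev_precS; [exact IH|]. eapply reval_eq; [reval_leaf | lia].
Qed.

Definition rf_sub :=
  RComp (RPrec (RProj 0) (RComp rf_pred [RProj 1])) [RProj 1; RProj 0].

Lemma reval_sub x y : reval rf_sub [x; y] (x - y).
Proof.
  eapply reval_comp2; [reval_leaf | reval_leaf |].
  induction y as [|y IH]; [eapply reval_eq; [apply ev_prec0; reval_leaf | lia]|].
  eapply ev_precS; [exact IH|]. eapply reval_comp1; [reval_leaf|].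
  eapply reval_eq; [apply reval_pred | lia].
Qed.

Definition rf_pow := RPrec (rf_const 1) (RComp rf_mul [RProj 1; RProj 2]).

Lemma reval_pow e b : reval rf_pow [e; b] (b ^ e).
Proof.
  induction e as [|e IH]; [apply ev_prec0; reval_leaf|].
  eapply ev_precS; [exact IH|]. eapply reval_comp2; [reval_leaf | reval_leaf |].
  eapply reval_eq; [apply reval_mul | simpl; lia].
Qed.

(* [x / d] is the least [z] with [x + 1 <= (z + 1) * d]. *)
Definition rf_div :=
  RMu (RComp rf_sub [RComp rf_add [RProj 1; rf_const 1];
                     RComp rf_mul [RComp rf_add [RProj 0; rf_const 1]; RProj 2]]).

Lemma reval_div x d : d <> 0 -> reval rf_div [x; d] (x / d).
Proof.
  intros Hd.
  assert (Hbody : forall z, reval (RComp rf_sub [RComp rf_add [RProj 1; rf_const 1];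
            RComp rf_mul [RComp rf_add [RProj 0; rf_const 1]; RProj 2]])
            [z; x; d] ((x + 1) - (z + 1) * d)).
  { intros z. eapply reval_comp2; [| | apply reval_sub].
    - eapply reval_comp2; [reval_leaf | reval_leaf | apply reval_add].
    - eapply reval_comp2; [| reval_leaf | apply reval_mul].
      eapply reval_comp2; [reval_leaf | reval_leaf | apply reval_add]. }
  pose proof (Nat.div_mod x d Hd). pose proof (Nat.mod_upper_bound x d Hd).
  constructor.
  - eapply reval_eq; [apply Hbody | nia].
  - intros m Hm. exists (x - (m + 1) * d). eapply reval_eq; [apply Hbody | nia].
Qed.

(* [log2 x] is the least [z] with [x + 1 <= 2 ^ (z + 1)]. *)
Definition rf_log2 :=
  RMu (RComp rf_sub [RComp rf_add [RProj 1; rf_const 1];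
                     RComp rf_pow [RComp rf_add [RProj 0; rf_const 1]; rf_const 2]]).

Lemma reval_log2 x : 0 < x -> reval rf_log2 [x] (Nat.log2 x).
Proof.
  intros Hx.
  assert (Hbody : forall z, reval (RComp rf_sub [RComp rf_add [RProj 1; rf_const 1];
            RComp rf_pow [RComp rf_add [RProj 0; rf_const 1]; rf_const 2]])
            [z; x] ((x + 1) - 2 ^ (z + 1))).
  { intros z. eapply reval_comp2; [| | apply reval_sub].
    - eapply reval_comp2; [reval_leaf | reval_leaf | apply reval_add].
    - eapply reval_comp2; [| reval_leaf | apply reval_pow].
      eapply reval_comp2; [reval_leaf | reval_leaf | apply reval_add]. }
  destruct (Nat.log2_spec x Hx) as [Hlo Hhi]. constructor.
  - eapply reval_eq; [apply Hbody | rewrite !Nat.add_1_r; lia].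
  - intros m Hm. exists (x - 2 ^ (m + 1)). eapply reval_eq; [apply Hbody|].
    assert (2 ^ (m + 1) <= 2 ^ Nat.log2 x) by (apply Nat.pow_le_mono_r; lia). lia.
Qed.

Definition rf_mod2 :=
  RComp rf_sub [RProj 0; RComp rf_mul [rf_const 2; RComp rf_div [RProj 0; rf_const 2]]].

Lemma reval_mod2 x : reval rf_mod2 [x] (x mod 2).
Proof.
  eapply reval_comp2; [reval_leaf | |].
  - eapply reval_comp2; [reval_leaf | | apply reval_mul].
    eapply reval_comp2; [reval_leaf | reval_leaf | apply reval_div; lia].
  - eapply reval_eq; [apply reval_sub|]. pose proof (Nat.div_mod x 2). lia.
Qed.

Definition rf_xor :=
  RComp rf_sub [RComp rf_add [RProj 0; RProj 1];
                RComp rf_mul [rf_const 2; RComp rf_mul [RProj 0; RProj 1]]].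

Lemma reval_xor a b : reval rf_xor [Nat.b2n a; Nat.b2n b] (Nat.b2n (xorb a b)).
Proof.
  eapply reval_comp2; [| | eapply reval_eq; [apply reval_sub|]].
  - eapply reval_comp2; [reval_leaf | reval_leaf | apply reval_add].
  - eapply reval_comp2; [reval_leaf | | apply reval_mul].
    eapply reval_comp2; [reval_leaf | reval_leaf | apply reval_mul].
  - now destruct a, b.
Qed.

Definition rf_leb := RComp rf_sub [rf_const 1; RComp rf_sub [RProj 0; RProj 1]].

Lemma reval_leb u v : reval rf_leb [u; v] (Nat.b2n (u <=? v)).
Proof.
  eapply reval_comp2; [reval_leaf | | eapply reval_eq; [apply reval_sub|]].
  - eapply reval_comp2; [reval_leaf | reval_leaf | apply reval_sub].
  - destruct (Nat.leb_spec u v); cbn [Nat.b2n]; lia.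
Qed.

(** * Binary codes of situations *)

Definition enc_step (acc : nat) (b : bool) : nat := 2 * acc + Nat.b2n b.

Lemma fold_enc_step t a :
  fold_left enc_step t a = a * 2 ^ length t + fold_left enc_step t 0.
Proof.
  revert a; induction t as [|b t IH]; intros a; simpl; [lia|].
  rewrite (IH (enc_step a b)), (IH (enc_step 0 b)). unfold enc_step. nia.
Qed.

Lemma fold_enc_step_lt t : fold_left enc_step t 0 < 2 ^ length t.
Proof.
  induction t as [|b t IH]; simpl; [lia|].
  rewrite fold_enc_step. assert (enc_step 0 b <= 1) by (destruct b; cbv; lia). nia.
Qed.

Lemma encS_app s t : encS (s ++ t) = encS s * 2 ^ length t + fold_left enc_step t 0.
Proof. unfold encS. rewrite fold_left_app. apply fold_enc_step. Qed.

Lemma encS_snoc s b : encS (s ++ [b]) = 2 * encS s + Nat.b2n b.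
Proof. rewrite encS_app. simpl. unfold enc_step. lia. Qed.

Lemma encS_bounds s : 2 ^ length s <= encS s < 2 ^ S (length s).
Proof.
  change (2 ^ length s <= fold_left enc_step s 1 < 2 ^ S (length s)).
  rewrite fold_enc_step. pose proof (fold_enc_step_lt s). simpl. lia.
Qed.

Lemma encS_pos s : 0 < encS s.
Proof. pose proof (encS_bounds s). pose proof (Nat.pow_nonzero 2 (length s)). lia. Qed.

Lemma log2_encS s : Nat.log2 (encS s) = length s.
Proof. apply Nat.log2_unique; [lia | apply encS_bounds]. Qed.

Lemma encS_firstn s i : i <= length s ->
  encS s / 2 ^ (length s - i) = encS (firstn i s).
Proof.
  intros Hi. rewrite <- (firstn_skipn i s) at 1.
  rewrite encS_app, length_skipn, Nat.div_add_l by (apply Nat.pow_nonzero; lia).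
  rewrite Nat.div_small; [lia|]. rewrite <- length_skipn. apply fold_enc_step_lt.
Qed.

Lemma firstn_S_snoc (s : situation) i :
  i < length s -> firstn (S i) s = firstn i s ++ [nth i s false].
Proof.
  revert i; induction s as [|a s IH]; intros i Hi; simpl in *; [lia|].
  destruct i; [reflexivity|]. simpl. f_equal. apply IH. lia.
Qed.

Lemma reval_length s : reval rf_log2 [encS s] (length s).
Proof. rewrite <- log2_encS. apply reval_log2, encS_pos. Qed.

(* [s_{1:i}] is encoded by dropping the last [length s - i] binary digits. *)
Definition rf_firstn :=
  RComp rf_div [RProj 1; RComp rf_pow [RComp rf_sub [RComp rf_log2 [RProj 1]; RProj 0];
                                       rf_const 2]].

Lemma reval_firstn i s : i <= length s -> reval rf_firstn [i; encS s] (encS (firstn i s)).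
Proof.
  intros Hi. eapply reval_comp2; [reval_leaf | |].
  - eapply reval_comp2; [| reval_leaf | apply reval_pow].
    eapply reval_comp2; [| reval_leaf | apply reval_sub].
    eapply reval_comp1; [reval_leaf | apply reval_length].
  - eapply reval_eq; [apply reval_div, Nat.pow_nonzero; lia | apply encS_firstn, Hi].
Qed.

Definition rf_nth := RComp rf_mod2 [RComp rf_firstn [RComp rf_add [RProj 0; rf_const 1]; RProj 1]].

Lemma reval_nth i s : i < length s -> reval rf_nth [i; encS s] (Nat.b2n (nth i s false)).
Proof.
  intros Hi. eapply reval_comp1.
  - eapply reval_comp2; [| reval_leaf | apply (reval_firstn (i + 1)); lia].
    eapply reval_comp2; [reval_leaf | reval_leaf | apply reval_add].
  - eapply reval_eq; [apply reval_mod2|].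
    rewrite Nat.add_1_r, firstn_S_snoc, encS_snoc by exact Hi.
    rewrite Nat.mul_comm, Nat.add_comm, Nat.Div0.mod_add. now destruct (nth i s false).
Qed.

Fixpoint prefix_sum_from (g : situation -> bool -> nat) (pre s : situation) : nat :=
  match s with
  | [] => 0
  | b :: s => g pre b + prefix_sum_from g (pre ++ [b]) s
  end.

Definition prefix_sum (g : situation -> bool -> nat) (s : situation) : nat :=
  prefix_sum_from g [] s.

Lemma prefix_sum_from_snoc g pre s b :
  prefix_sum_from g pre (s ++ [b]) = prefix_sum_from g pre s + g (pre ++ s) b.
Proof.
  revert pre; induction s as [|a s IH]; intros pre; simpl.
  - rewrite app_nil_r. lia.
  - rewrite IH, <- app_assoc. simpl. lia.
Qed.

Lemma prefix_sum_snoc g s b : prefix_sum g (s ++ [b]) = prefix_sum g s + g s b.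
Proof. apply prefix_sum_from_snoc. Qed.

Section PrefixSum.
Variable g : situation -> bool -> nat.
Variable cg : recfn.
Hypothesis reval_cg : forall s b, reval cg [encS s; Nat.b2n b] (g s b).

Definition rf_prefix_sum_upto :=
  RPrec RZero (RComp rf_add [RProj 1; RComp cg [RComp rf_firstn [RProj 0; RProj 2];
                                                RComp rf_nth [RProj 0; RProj 2]]]).

Lemma reval_prefix_sum_upto i s :
  i <= length s -> reval rf_prefix_sum_upto [i; encS s] (prefix_sum g (firstn i s)).
Proof.
  induction i as [|i IH]; intros Hi; [apply ev_prec0; reval_leaf|].
  eapply ev_precS; [apply IH; lia|].
  eapply reval_comp2; [reval_leaf | | eapply reval_eq; [apply reval_add|]].
  - eapply reval_comp2; [| | apply reval_cg].
    + eapply reval_comp2; [reval_leaf | reval_leaf | apply reval_firstn; lia].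
    + eapply reval_comp2; [reval_leaf | reval_leaf | apply reval_nth; lia].
  - now rewrite firstn_S_snoc, prefix_sum_snoc by lia.
Qed.

Definition rf_prefix_sum := RComp rf_prefix_sum_upto [RComp rf_log2 [RProj 0]; RProj 0].

Lemma reval_prefix_sum s : reval rf_prefix_sum [encS s] (prefix_sum g s).
Proof.
  eapply reval_comp2; [eapply reval_comp1; [reval_leaf | apply reval_length] | reval_leaf |].
  rewrite <- (firstn_all s) at 3. apply reval_prefix_sum_upto. lia.
Qed.
End PrefixSum.

(** * Recursive rational maps *)

Open Scope R_scope.

Definition computable_bool {D : Type} (enc : D -> list nat) (p : D -> bool) : Prop :=
  exists c, forall d, reval c (enc d) (Nat.b2n (p d)).

Lemma revals_projs (ys xs : list nat) :
  revals (map RProj (seq (length ys) (length xs))) (ys ++ xs) xs.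
Proof.
  revert ys; induction xs as [|x xs IH]; intros ys; simpl; constructor.
  - eapply reval_eq; [apply ev_proj; rewrite length_app; simpl; lia | apply nth_middle].
  - specialize (IH (ys ++ [x])). rewrite <- app_assoc, length_app, Nat.add_1_r in IH.
    exact IH.
Qed.

Lemma rec_rat_comp {D D' : Type} (enc : D -> list nat) (enc' : D' -> list nat)
    (f : D' -> D) gs r :
  (forall d, revals gs (enc' d) (enc (f d))) -> rec_rat enc r -> rec_rat enc' (fun d => r (f d)).
Proof.
  intros Hgs (c1 & c2 & c3 & Hc). exists (RComp c1 gs), (RComp c2 gs), (RComp c3 gs).
  intros d. destruct (Hc (f d)) as (a & b & k & Ha & Hb & Hk & Hr).
  exists a, b, k. repeat split; try (econstructor; [apply Hgs | eassumption]). exact Hr.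
Qed.

Lemma rec_rat_ignore_index {D : Type} (enc : D -> list nat) k r :
  (forall d, length (enc d) = k) -> rec_rat enc r -> rec_rat (encN enc) (fun dn => r (fst dn)).
Proof.
  intros Hk. apply rec_rat_comp with (gs := map RProj (seq 1 k)).
  intros [d n]. rewrite <- (Hk d). exact (revals_projs [n] (enc d)).
Qed.

Lemma rec_rat_at_index {D : Type} (enc : D -> list nat) k q n :
  (forall d, length (enc d) = k) -> rec_rat (encN enc) q -> rec_rat enc (fun d => q (d, n)).
Proof.
  intros Hk. apply rec_rat_comp with (gs := rf_const n :: map RProj (seq 0 k)).
  intros d. constructor; [apply reval_const|]. rewrite <- (Hk d). exact (revals_projs [] (enc d)).
Qed.

Lemma rec_rat_lower_semicomputable {D : Type} (enc : D -> list nat) k r :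
  (forall d, length (enc d) = k) -> rec_rat enc r -> lower_semicomputable enc r.
Proof.
  intros Hk Hr. exists (fun d _ => r d). split; [exact (rec_rat_ignore_index enc k r Hk Hr)|].
  intros d. split; [intros; apply Rle_refl|].
  intros e He. exists 0%nat. intros. unfold R_dist. rewrite Rminus_diag, Rabs_R0. exact He.
Qed.

Lemma rec_rat_computable_real {D : Type} (enc : D -> list nat) k r :
  (forall d, length (enc d) = k) -> rec_rat enc r -> computable_real enc r.
Proof.
  intros Hk Hr. exists (fun d _ => r d). split; [exact (rec_rat_ignore_index enc k r Hk Hr)|].
  intros d n. rewrite Rminus_diag, Rabs_R0. apply Rinv_0_lt_compat, pow_lt. lra.
Qed.

(* [(a - b) / (k + 1) >= 1/2] iff [2 b + k + 1 <= 2 a], a test on naturals. *)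
Lemma rec_rat_half_test {D : Type} (enc : D -> list nat) r :
  rec_rat enc r ->
  exists side, computable_bool enc side /\ forall d, side d = true <-> 1/2 <= r d.
Proof.
  intros (c1 & c2 & c3 & Hc).
  exists (fun d => if Rle_dec (1/2) (r d) then true else false). split.
  - exists (RComp rf_leb [RComp rf_add [RComp rf_add [c2; c2]; RComp rf_add [c3; rf_const 1]];
                          RComp rf_add [c1; c1]]).
    intros d. destruct (Hc d) as (a & b & k & Ha & Hb & Hk & Hr).
    eapply reval_comp2; [| | eapply reval_eq; [apply reval_leb|]].
    + eapply reval_comp2; [| | apply reval_add].
      * eapply reval_comp2; [exact Hb | exact Hb | apply reval_add].
      * eapply reval_comp2; [exact Hk | apply reval_const | apply reval_add].
    + eapply reval_comp2; [exact Ha | exact Ha | apply reval_add].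
    + assert (Hx : r d * (INR k + 1) = INR a - INR b).
      { rewrite Hr. field. pose proof (pos_INR k). lra. }
      pose proof (pos_INR k).
      destruct (Nat.leb_spec (b + b + (k + 1)) (a + a)) as [Hle|Hlt];
        destruct (Rle_dec (1/2) (r d)) as [Hh|Hh]; try reflexivity; exfalso.
      * apply le_INR in Hle. rewrite !plus_INR in Hle. simpl in Hle. nra.
      * apply lt_INR in Hlt. rewrite !plus_INR in Hlt. simpl in Hlt. nra.
  - intros d. destruct (Rle_dec (1/2) (r d)); split; easy.
Qed.

(** * Betting against a computable side *)

Lemma three_halves_pow_ge n : 1 + INR n / 2 <= (3/2) ^ n.
Proof. induction n as [|n IH]; [simpl; lra|]. rewrite S_INR. simpl. pose proof (pos_INR n). nra. Qed.

Lemma prefix_S (w : path) n : prefix w (S n) = prefix w n ++ [w n].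
Proof. unfold prefix. now rewrite seq_S, map_app. Qed.

Definition contrarian_factor (d b : bool) : R := if xorb d b then 3/2 else 1/4.

Section Contrarian.
Variable side : situation -> bool.

Definition contrarian_count (s : situation) : nat :=
  prefix_sum (fun t b => Nat.b2n (xorb (side t) b)) s.

Definition contrarian (s : situation) : R := 6 ^ contrarian_count s / 4 ^ length s.

Lemma contrarian_nil : contrarian [] = 1.
Proof. unfold contrarian. simpl. lra. Qed.

Lemma contrarian_pos s : 0 < contrarian s.
Proof. apply Rdiv_lt_0_compat; apply pow_lt; lra. Qed.

Lemma contrarian_snoc s b :
  contrarian (s ++ [b]) = contrarian s * contrarian_factor (side s) b.
Proof.
  unfold contrarian, contrarian_count, contrarian_factor.
  rewrite prefix_sum_snoc, length_app, !pow_add. pose proof (pow_lt 4 (length s)).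
  destruct (xorb (side s) b); simpl; field; lra.
Qed.

Fixpoint contrarian_prefix (n : nat) : situation :=
  match n with
  | O => []
  | S n => contrarian_prefix n ++ [negb (side (contrarian_prefix n))]
  end.

Definition contrarian_path : path := fun i => negb (side (contrarian_prefix i)).

Lemma contrarian_along_path n : contrarian (prefix contrarian_path n) = (3/2) ^ n.
Proof.
  induction n as [|n IH]; [apply contrarian_nil|].
  assert (Hpre : prefix contrarian_path n = contrarian_prefix n).
  { clear IH. induction n as [|n IHn]; [reflexivity|]. now rewrite prefix_S, IHn. }
  rewrite prefix_S, contrarian_snoc, IH, Hpre. unfold contrarian_path, contrarian_factor.
  destruct (side (contrarian_prefix n)); simpl; ring.
Qed.

Lemma contrarian_unbounded : limsup_infty (fun n => contrarian (prefix contrarian_path n)).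
Proof.
  intros B N. destruct (INR_archimed (1/2) B) as [m Hm]; [lra|].
  exists (Nat.max N m). split; [lia|]. rewrite contrarian_along_path.
  pose proof (three_halves_pow_ge (Nat.max N m)).
  assert (INR m <= INR (Nat.max N m)) by (apply le_INR; lia). lra.
Qed.

Hypothesis side_computable : computable_bool encSit side.

Lemma disagreement_computable :
  exists c, forall s b, reval c [encS s; Nat.b2n b] (Nat.b2n (xorb (side s) b)).
Proof.
  destruct side_computable as [cd Hcd].
  exists (RComp rf_xor [RComp cd [RProj 0]; RProj 1]). intros s b.
  eapply reval_comp2; [eapply reval_comp1; [reval_leaf | apply Hcd] | reval_leaf | apply reval_xor].
Qed.

(* [contrarian_factor d b = (1 + 5 [d xor b]) / 4] *)
Lemma contrarian_factor_rec_rat :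
  rec_rat encSitBit (fun sx => contrarian_factor (side (fst sx)) (snd sx)).
Proof.
  destruct disagreement_computable as [cg Hcg].
  exists (RComp rf_add [rf_const 1; RComp rf_mul [rf_const 5; cg]]), RZero, (rf_const 3).
  intros [s b]. exists (1 + 5 * Nat.b2n (xorb (side s) b))%nat, 0%nat, 3%nat.
  repeat split; [| constructor | apply reval_const |].
  - eapply reval_comp2; [reval_leaf | | apply reval_add].
    eapply reval_comp2; [reval_leaf | apply Hcg | apply reval_mul].
  - unfold contrarian_factor. simpl. destruct (xorb (side s) b); simpl; field.
Qed.

Lemma contrarian_rec_rat : rec_rat encSit contrarian.
Proof.
  destruct disagreement_computable as [cg Hcg].
  exists (RComp rf_pow [rf_prefix_sum cg; rf_const 6]), RZero,
         (RComp rf_pred [RComp rf_pow [rf_log2; rf_const 4]]).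
  intros s. exists (6 ^ contrarian_count s)%nat, 0%nat, (4 ^ length s - 1)%nat.
  repeat split; [| constructor | |].
  - eapply reval_comp2; [apply (reval_prefix_sum _ _ Hcg) | reval_leaf | apply reval_pow].
  - eapply reval_comp1; [| apply reval_pred].
    eapply reval_comp2; [apply reval_length | reval_leaf | apply reval_pow].
  - pose proof (Nat.pow_nonzero 4 (length s) ltac:(lia)).
    rewrite minus_INR, !pow_INR by lia. unfold contrarian. simpl INR.
    replace (1 + 1 + 1 + 1 + 1 + 1) with 6 by ring.
    replace (1 + 1 + 1 + 1) with 4 by ring. f_equal; ring.
Qed.

Variable phi : situation -> R * R.
Hypothesis side_true_high : forall s, side s = true -> 2/5 <= fst (phi s).
Hypothesis side_false_low : forall s, side s = false -> snd (phi s) <= 3/5.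

Lemma contrarian_supermartingale : supermartingale phi contrarian.
Proof.
  intros s r Hr. unfold Ex, Defs.Delta. rewrite !contrarian_snoc. pose proof (contrarian_pos s).
  unfold contrarian_factor. destruct (side s) eqn:Hs; simpl.
  - specialize (side_true_high s Hs). nra.
  - specialize (side_false_low s Hs). nra.
Qed.

Lemma contrarian_test_supermartingale : test_supermartingale phi contrarian.
Proof.
  split; [split; [intros s; left; apply contrarian_pos | apply contrarian_nil]|].
  apply contrarian_supermartingale.
Qed.

Lemma contrarian_F_C : F_C contrarian.
Proof.
  split; [apply contrarian_test_supermartingale|].
  split; [apply contrarian_pos | apply contrarian_rec_rat].
Qed.

Lemma half_growth : growth_function (fun n => INR n / 2).
Proof.
  split; [|split; [|split]].
  - apply (rec_rat_computable_real encNat 1); [reflexivity|].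
    exists (RProj 0), RZero, (rf_const 1). intros n. exists n, 0%nat, 1%nat.
    repeat split; [reval_leaf | constructor | apply reval_const | simpl; field].
  - intros n. pose proof (pos_INR n). lra.
  - intros n m Hnm. apply le_INR in Hnm. lra.
  - intros B. destruct (INR_archimed (1/2) B) as [n Hn]; [lra|]. exists n. lra.
Qed.

Lemma not_all_random_of_computable_side Rn : ~ forall w, random Rn phi w.
Proof.
  intros Hall. specialize (Hall contrarian_path). destruct Rn; apply Hall.
  - exists contrarian. repeat split; try apply contrarian_test_supermartingale;
      [| apply contrarian_unbounded].
    apply (rec_rat_lower_semicomputable encSit 1); [reflexivity | apply contrarian_rec_rat].
  - exists contrarian. repeat split; try apply contrarian_test_supermartingale;
      [| apply contrarian_unbounded].
    exists (fun s b => contrarian_factor (side s) b). split; [|split].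
    + intros s b. unfold contrarian_factor. destruct (xorb (side s) b); lra.
    + apply (rec_rat_lower_semicomputable encSitBit 2); [reflexivity|].
      apply contrarian_factor_rec_rat.
    + split; [apply contrarian_nil | intros; apply contrarian_snoc].
  - exists contrarian. split; [apply contrarian_F_C|].
    split; [apply contrarian_test_supermartingale | apply contrarian_unbounded].
  - exists contrarian, (fun n => INR n / 2). split; [apply contrarian_F_C|].
    split; [apply contrarian_test_supermartingale | split; [apply half_growth|]].
    intros eps N Heps. exists N. split; [lia|]. rewrite contrarian_along_path.
    pose proof (three_halves_pow_ge N). lra.
Qed.
End Contrarian.

(** * Defeating a countable family of processes *)

Definition increases_at (F : situation -> R) (s : situation) : Prop :=
  exists x, F s < F (s ++ [x]).

Definition increases_infinitely_often (F : situation -> R) : Prop :=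
  forall L : list situation, exists s, increases_at F s /\ ~ In s L.

(* Past the lengths of the situations in [L], a process that only increases
   inside [L] is non-increasing along every path. *)
Lemma increases_infinitely_often_of_unbounded F w :
  limsup_infty (fun n => F (prefix w n)) -> increases_infinitely_often F.
Proof.
  intros Hunb L. apply NNPP. intros Hfin.
  set (N := S (list_max (map (@length bool) L))).
  assert (Hflat : forall m, (N <= m)%nat -> F (prefix w (S m)) <= F (prefix w m)).
  { intros m Hm. rewrite prefix_S. apply Rnot_lt_le. intros Hlt. apply Hfin.
    exists (prefix w m). split; [now exists (w m)|]. intros Hin.
    assert (Hle : (length (prefix w m) <= list_max (map (@length bool) L))%nat).
    { apply (proj1 (Forall_forall _ _) (proj1 (list_max_le _ _) (le_n _))), in_map, Hin. }
    unfold prefix in Hle. rewrite length_map, length_seq in Hle. lia. }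
  assert (Hbound : forall k, F (prefix w (N + k)) <= F (prefix w N)).
  { induction k as [|k IH]; [rewrite Nat.add_0_r; lra|].
    rewrite Nat.add_succ_r. pose proof (Hflat (N + k)%nat ltac:(lia)). lra. }
  destruct (Hunb (F (prefix w N)) N) as [m [Hm Hgt]].
  specialize (Hbound (m - N)%nat). replace (N + (m - N))%nat with m in Hbound by lia. lra.
Qed.

Definition up_forecast (F : situation -> R) (s : situation) : R :=
  if Rlt_dec (F s) (F (s ++ [true])) then 1 else 0.

Lemma Ex_up_forecast_pos F s : increases_at F s -> 0 < Ex (up_forecast F s) (Defs.Delta F s).
Proof.
  intros [x Hx]. unfold Ex, Defs.Delta, up_forecast.
  destruct Rlt_dec; [lra|]. destruct x; lra.
Qed.

Section Defeat.
Variable T : nat -> situation -> R.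

Definition fresh_increasing (n : nat) (L : list situation) : situation :=
  epsilon (inhabits []) (fun s => increases_at (T n) s /\ ~ In s L).

Fixpoint chosen (n : nat) : list situation :=
  match n with
  | O => []
  | S n => chosen n ++ [fresh_increasing n (chosen n)]
  end.

Definition chosen_at (n : nat) : situation := fresh_increasing n (chosen n).

Lemma chosen_at_spec n : increases_infinitely_often (T n) ->
  increases_at (T n) (chosen_at n) /\ ~ In (chosen_at n) (chosen n).
Proof. intros H. unfold chosen_at, fresh_increasing. apply (epsilon_spec (inhabits [])), H. Qed.

Lemma chosen_at_in m n : (m < n)%nat -> In (chosen_at m) (chosen n).
Proof.
  induction n as [|n IH]; intros H; [lia|]. simpl. apply in_or_app.
  destruct (Nat.eq_dec m n) as [->|Hne]; [right; now left | left; apply IH; lia].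
Qed.

Lemma chosen_at_inj m n :
  increases_infinitely_often (T m) -> increases_infinitely_often (T n) ->
  chosen_at m = chosen_at n -> m = n.
Proof.
  intros Hm Hn He. destruct (Nat.lt_trichotomy m n) as [H|[H|H]]; [exfalso| exact H | exfalso].
  - apply (proj2 (chosen_at_spec n Hn)). rewrite <- He. now apply chosen_at_in.
  - apply (proj2 (chosen_at_spec m Hm)). rewrite He. now apply chosen_at_in.
Qed.

Definition owner (s : situation) : nat :=
  epsilon (inhabits 0%nat) (fun n => increases_infinitely_often (T n) /\ chosen_at n = s).

Lemma owner_chosen_at n : increases_infinitely_often (T n) -> owner (chosen_at n) = n.
Proof.
  intros Hn. unfold owner.
  destruct (epsilon_spec (inhabits 0%nat)
              (fun k => increases_infinitely_often (T k) /\ chosen_at k = chosen_at n))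
    as [Hk He]; [now exists n|].
  now apply chosen_at_inj.
Qed.

(* At the situation chosen for [T n], the forecast puts all mass on an outcome
   where [T n] goes up. *)
Definition defeating_forecast (s : situation) : R * R :=
  (up_forecast (T (owner s)) s, up_forecast (T (owner s)) s).

Lemma defeating_forecast_fs : forecasting_system defeating_forecast.
Proof. intros s. unfold defeating_forecast, up_forecast. simpl. destruct Rlt_dec; lra. Qed.

Lemma defeating_forecast_precise : precise defeating_forecast.
Proof. intros s. reflexivity. Qed.

Lemma defeating_forecast_defeats n w :
  limsup_infty (fun m => T n (prefix w m)) -> ~ supermartingale defeating_forecast (T n).
Proof.
  intros Hunb Hsup. pose proof (increases_infinitely_often_of_unbounded _ _ Hunb) as Hio.
  pose proof (Ex_up_forecast_pos _ _ (proj1 (chosen_at_spec n Hio))) as Hpos.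
  specialize (Hsup (chosen_at n) (up_forecast (T n) (chosen_at n))).
  unfold defeating_forecast in Hsup. simpl in Hsup. rewrite owner_chosen_at in Hsup by exact Hio.
  specialize (Hsup (conj (Rle_refl _) (Rle_refl _))). lra.
Qed.
End Defeat.

Definition countable_class (P : (situation -> R) -> Prop) : Prop :=
  exists T : nat -> situation -> R, forall F, P F -> exists n, T n = F.

Lemma countable_class_defeated P : countable_class P ->
  exists phi, forecasting_system phi /\ precise phi /\
    forall F w, P F -> limsup_infty (fun n => F (prefix w n)) -> ~ supermartingale phi F.
Proof.
  intros [T HT]. exists (defeating_forecast T).
  split; [apply defeating_forecast_fs | split; [apply defeating_forecast_precise|]].
  intros F w HF. destruct (HT F HF) as [n <-]. apply defeating_forecast_defeats.
Qed.

(** * Countability of the classes of test processes *)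

Definition recfn_nested_ind (P : recfn -> Prop) (HZ : P RZero) (HS : P RSucc)
    (HP : forall i, P (RProj i))
    (HC : forall f gs, P f -> Forall P gs -> P (RComp f gs))
    (HR : forall f g, P f -> P g -> P (RPrec f g)) (HM : forall f, P f -> P (RMu f)) :
  forall f, P f :=
  fix ind f := match f with
  | RZero => HZ
  | RSucc => HS
  | RProj i => HP i
  | RComp f gs => HC f gs (ind f)
      ((fix ind_list l : Forall P l :=
          match l with [] => Forall_nil _ | g :: l => Forall_cons g (ind g) (ind_list l) end) gs)
  | RPrec f g => HR f g (ind f) (ind g)
  | RMu f => HM f (ind f)
  end.

Arguments to_nat : simpl never.

Fixpoint enc_list (l : list nat) : nat :=
  match l with [] => 0 | a :: l => S (to_nat (a, enc_list l)) end.

Lemma enc_list_inj l1 l2 : enc_list l1 = enc_list l2 -> l1 = l2.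
Proof.
  revert l2; induction l1 as [|a l1 IH]; intros [|b l2] H; simpl in H; try discriminate; auto.
  injection H as H. apply to_nat_inj in H. injection H as -> H. f_equal. auto.
Qed.

Fixpoint enc_recfn (f : recfn) : nat :=
  match f with
  | RZero => to_nat (0, 0)
  | RSucc => to_nat (1, 0)
  | RProj i => to_nat (2, i)
  | RComp f gs => to_nat (3, to_nat (enc_recfn f, enc_list (map enc_recfn gs)))
  | RPrec f g => to_nat (4, to_nat (enc_recfn f, enc_recfn g))
  | RMu f => to_nat (5, enc_recfn f)
  end%nat.

Lemma enc_recfn_inj f g : enc_recfn f = enc_recfn g -> f = g.
Proof.
  revert g. induction f as [| |i|f gs IHf IHgs|f f' IHf IHf'|f IHf] using recfn_nested_ind;
    intros [| |j|g hs|g g'|g] H; simpl in H; apply to_nat_inj in H;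
    try discriminate; try reflexivity; injection H as H.
  - now subst.
  - apply to_nat_inj in H. injection H as Hf Hgs. rewrite (IHf _ Hf). f_equal.
    apply enc_list_inj in Hgs. clear Hf. revert hs Hgs.
    induction IHgs as [|f1 gs Hf1 _ IH]; intros [|h hs] Hgs; simpl in Hgs; try discriminate; auto.
    injection Hgs as H1 H2. f_equal; auto.
  - apply to_nat_inj in H. injection H as H1 H2. f_equal; auto.
  - f_equal; auto.
Qed.

Definition enc_code (c : recfn * recfn * recfn) : nat :=
  let '(c1, c2, c3) := c in to_nat (enc_recfn c1, to_nat (enc_recfn c2, enc_recfn c3)).

Lemma enc_code_inj c c' : enc_code c = enc_code c' -> c = c'.
Proof.
  destruct c as [[c1 c2] c3], c' as [[d1 d2] d3]. simpl. intros H.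
  apply to_nat_inj in H. injection H as H1 H. apply to_nat_inj in H. injection H as H2 H3.
  apply enc_recfn_inj in H1, H2, H3. now subst.
Qed.

Lemma countable_class_of_codes {C : Type} (code : C -> nat)
    (code_inj : forall c c', code c = code c' -> c = c')
    (Rep : C -> (situation -> R) -> Prop)
    (Rep_det : forall c F G, Rep c F -> Rep c G -> F = G)
    (P : (situation -> R) -> Prop) :
  (forall F, P F -> exists c, Rep c F) -> countable_class P.
Proof.
  intros HP.
  exists (fun n => epsilon (inhabits (fun _ => 0)) (fun F => exists c, code c = n /\ Rep c F)).
  intros F HF. destruct (HP F HF) as [c Hc]. exists (code c).
  destruct (epsilon_spec (inhabits (fun _ => 0)) (fun G => exists c', code c' = code c /\ Rep c' G))
    as [c' [Hcode Hc']]; [now exists F, c|].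
  apply code_inj in Hcode. subst c'. eapply Rep_det; eassumption.
Qed.

Definition rec_rat_by {D : Type} (c : recfn * recfn * recfn) (enc : D -> list nat)
    (r : D -> R) : Prop :=
  let '(c1, c2, c3) := c in
  forall d, exists a b k : nat,
    reval c1 (enc d) a /\ reval c2 (enc d) b /\ reval c3 (enc d) k /\
    r d = (INR a - INR b) / (INR k + 1).

Lemma rec_rat_by_det {D : Type} c (enc : D -> list nat) r1 r2 :
  rec_rat_by c enc r1 -> rec_rat_by c enc r2 -> r1 = r2.
Proof.
  destruct c as [[c1 c2] c3]. intros H1 H2. apply functional_extensionality. intros d.
  destruct (H1 d) as (a & b & k & Ha & Hb & Hk & ->).
  destruct (H2 d) as (a' & b' & k' & Ha' & Hb' & Hk' & ->).
  now rewrite (reval_det _ _ _ Ha _ Ha'), (reval_det _ _ _ Hb _ Hb'), (reval_det _ _ _ Hk _ Hk').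
Qed.

Lemma rec_rat_code {D : Type} (enc : D -> list nat) r :
  rec_rat enc r -> exists c, rec_rat_by c enc r.
Proof. intros (c1 & c2 & c3 & H). now exists (c1, c2, c3). Qed.

Definition lower_semicomputable_by {D : Type} (c : recfn * recfn * recfn)
    (enc : D -> list nat) (r : D -> R) : Prop :=
  exists q : D * nat -> R,
    rec_rat_by c (encN enc) q /\ forall d, Un_cv (fun n => q (d, n)) (r d).

Lemma lower_semicomputable_by_det {D : Type} c (enc : D -> list nat) r1 r2 :
  lower_semicomputable_by c enc r1 -> lower_semicomputable_by c enc r2 -> r1 = r2.
Proof.
  intros [q1 [H1 C1]] [q2 [H2 C2]]. apply functional_extensionality. intros d.
  pose proof (rec_rat_by_det _ _ _ _ H1 H2) as <-. exact (UL_sequence _ _ _ (C1 d) (C2 d)).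
Qed.

Lemma lower_semicomputable_code {D : Type} (enc : D -> list nat) r :
  lower_semicomputable enc r -> exists c, lower_semicomputable_by c enc r.
Proof.
  intros [q [Hq Hcv]]. destruct (rec_rat_code _ _ Hq) as [c Hc].
  exists c, (fun dn => q (fst dn) (snd dn)). split; [exact Hc | apply Hcv].
Qed.

Lemma generated_by_det D F G : generated_by D F -> generated_by D G -> F = G.
Proof.
  intros [HF0 HF] [HG0 HG]. apply functional_extensionality. intros s.
  induction s as [|s x IH] using rev_ind; [congruence|]. now rewrite HF, HG, IH.
Qed.

Lemma F_ML_countable : countable_class F_ML.
Proof.
  apply (countable_class_of_codes enc_code enc_code_inj
           (fun c F => lower_semicomputable_by c encSit F)).
  - intros c F G. apply lower_semicomputable_by_det.
  - intros F [_ HF]. now apply lower_semicomputable_code.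
Qed.

Lemma F_wML_countable : countable_class F_wML.
Proof.
  apply (countable_class_of_codes enc_code enc_code_inj (fun c F => exists D,
           lower_semicomputable_by c encSitBit (fun sx => D (fst sx) (snd sx)) /\
           generated_by D F)).
  - intros c F G [D1 [H1 G1]] [D2 [H2 G2]].
    pose proof (lower_semicomputable_by_det _ _ _ _ H1 H2) as HD.
    assert (D1 = D2) as <-.
    { apply functional_extensionality. intros s. apply functional_extensionality. intros x.
      exact (equal_f HD (s, x)). }
    eapply generated_by_det; eassumption.
  - intros F [_ (D & _ & HD & Hgen)]. destruct (lower_semicomputable_code _ _ HD) as [c Hc].
    now exists c, D.
Qed.

Lemma F_C_countable : countable_class F_C.
Proof.
  apply (countable_class_of_codes enc_code enc_code_inj (fun c F => rec_rat_by c encSit F)).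
  - intros c F G. apply rec_rat_by_det.
  - intros F (_ & _ & HF). now apply rec_rat_code.
Qed.

(** * Precise forecasts for which every path is random *)

Lemma limsup_infty_of_growth (a tau : nat -> R) :
  (forall n m, (n <= m)%nat -> tau n <= tau m) -> (forall B, exists n, tau n > B) ->
  limsup_nonneg (fun n => a n - tau n) -> limsup_infty a.
Proof.
  intros Hmono Hunb Hnn B N. destruct (Hunb (B + 1)) as [n0 Hn0].
  destruct (Hnn 1 (Nat.max N n0)) as [n [Hn Ha]]; [lra|].
  exists n. split; [lia|]. pose proof (Hmono n0 n ltac:(lia)). lra.
Qed.

Lemma random_forecaster_exists Rn :
  exists phi, forecasting_system phi /\ precise phi /\ forall w, random Rn phi w.
Proof.
  set (P := match Rn with R_ML => F_ML | R_wML => F_wML | _ => F_C end).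
  assert (HP : countable_class P)
    by (destruct Rn; [apply F_ML_countable | apply F_wML_countable | apply F_C_countable ..]).
  destruct (countable_class_defeated P HP) as (phi & Hfs & Hprec & Hdef).
  exists phi. split; [exact Hfs | split; [exact Hprec|]].
  intros w. destruct Rn; simpl.
  - intros (T & HT & [_ Hsup] & Hunb). exact (Hdef T w HT Hunb Hsup).
  - intros (T & HT & [_ Hsup] & Hunb). exact (Hdef T w HT Hunb Hsup).
  - intros (T & HT & [_ Hsup] & Hunb). exact (Hdef T w HT Hunb Hsup).
  - intros (T & tau & HT & [_ Hsup] & (_ & _ & Hmono & Hgrow) & Hnn).
    exact (Hdef T w HT (limsup_infty_of_growth _ _ Hmono Hgrow Hnn) Hsup).
Qed.

Lemma random_precise_not_stationary Rn phi :
  precise phi -> (forall w, random Rn phi w) -> ~ stationary phi.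
Proof.
  intros Hprec Hall [I HI].
  assert (Hconst : forall b, computable_bool encSit (fun _ => b))
    by (intros b; exists (rf_const (Nat.b2n b)); intros; apply reval_const).
  destruct (Rle_dec (1/2) (fst I)).
  - apply (not_all_random_of_computable_side (fun _ => true) (Hconst true) phi) with Rn;
      [intros s _; rewrite HI; lra | discriminate | exact Hall].
  - apply (not_all_random_of_computable_side (fun _ => false) (Hconst false) phi) with Rn;
      [discriminate | intros s _; rewrite <- Hprec, HI; lra | exact Hall].
Qed.

(* A rational approximation within [1/16] decides, for every situation, one of
   [phi s >= 2/5] and [phi s <= 3/5]. *)
Lemma random_precise_not_computable Rn phi :
  precise phi -> (forall w, random Rn phi w) -> ~ computable_fs phi.
Proof.
  intros Hprec Hall [[q [Hq Happrox]] _].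
  destruct (rec_rat_half_test encSit (fun s => q s 4%nat))
    as (side & Hside & Hhalf); [exact (rec_rat_at_index encSit 1 _ 4 (fun _ => eq_refl) Hq)|].
  assert (Hclose : forall s, Rabs (fst (phi s) - q s 4%nat) < 1/16)
    by (intros s; specialize (Happrox s 4%nat); simpl in Happrox; lra).
  apply (not_all_random_of_computable_side side Hside phi) with Rn; [| | exact Hall].
  - intros s Hs. apply Hhalf in Hs. specialize (Hclose s). apply Rabs_def2 in Hclose. lra.
  - intros s Hs. assert (~ 1/2 <= q s 4%nat) by (rewrite <- Hhalf, Hs; discriminate).
    rewrite <- Hprec. specialize (Hclose s). apply Rabs_def2 in Hclose. lra.
Qed.

Theorem corollary15 (Rn : rnotion) :
  (exists phi, forecasting_system phi /\ precise phi /\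
     forall w : path, random Rn phi w) /\
  (forall phi, forecasting_system phi -> precise phi ->
     (forall w : path, random Rn phi w) ->
     ~ stationary phi /\ ~ computable_fs phi).
Proof.
  split; [apply random_forecaster_exists|].
  intros phi _ Hprec Hall. split.
  - exact (random_precise_not_stationary Rn phi Hprec Hall).
  - exact (random_precise_not_computable Rn phi Hprec Hall).
Qed.
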